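(* Let $N, M$ be positive integers, let $\mathbf{a} \in \mathbb{C}^{N}$ and $\mathbf{B} \in \mathbb{C}^{N \times M}$ be constants. For diagonal matrices $\mathbf{Z}_1,\mathbf{Z}_2 \in \mathbb{C}^{N\times N}$ and vectors $\mathbf{z}_3,\mathbf{z}_4 \in \mathbb{C}^M$ define \[ \begin{aligned} \Lambda_{\mathbf{a},\mathbf{B}}(\mathbf{Z}_1,\mathbf{Z}_2,\mathbf{z}_3,\mathbf{z}_4) \triangleq\ & \tfrac14\big\|\mathrm{diag}(\mathbf{Z}_1^* ) + \mathrm{diag}(\mathbf{a})\mathbf{B}\mathbf{z}_3\big\|_2^2 \\ & - \tfrac12\Re\Big\{\big(\mathrm{diag}(\mathbf{Z}_2^* ) - \mathrm{diag}(\mathbf{a})\mathbf{B}\mathbf{z}_4\big)^{\mathsf H}\big(\mathrm{diag}(\mathbf{Z}_1^* ) - \mathrm{diag}(\mathbf{a})\mathbf{B}\mathbf{z}_3\big)\Big\} \\ & + \tfrac14\big\|\mathrm{diag}(\mathbf{Z}_2^* ) - \mathrm{diag}(\mathbf{a})\mathbf{B}\mathbf{z}_4\big\|_2^2 . \end{aligned} \] Fix a diagonal matrix $\mathbf{X}_0 \in \mathbb{C}^{N\times N}$ and a vector $\mathbf{y}_0 \in \mathbb{C}^M$. Let $\mathbf{X} \in \mathbb{C}^{N\times N}$ be diagonal, $\mathbf{y} \in \mathbb{C}^M$, and let $\rho,\kappa \in \mathbb{R}$ satisfy \[ \rho \ge \Lambda_{\mathbf{a},\mathbf{B}}(\mathbf{X},\mathbf{X}_0,\mathbf{y},\mathbf{y}_0),\quad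 \rho \ge \Lambda_{\mathbf{a},\mathbf{B}}(\mathbf{X},\mathbf{X}_0,-\mathbf{y},-\mathbf{y}_0), \] \[ \kappa \ge \Lambda_{\mathbf{a},\mathbf{B}}(\mathbf{X},\mathbf{X}_0,j\mathbf{y},j\mathbf{y}_0),\quad \kappa \ge \Lambda_{\mathbf{a},\mathbf{B}}(\mathbf{X},\mathbf{X}_0,-j\mathbf{y},-j\mathbf{y}_0). \] Then \[ |\mathbf{a}^{\mathsf T}\mathbf{X}\mathbf{B}\mathbf{y}|^2 \le \rho^2 + \kappa^2 . \] Moreover, each of the four functions $(\mathbf{X},\mathbf{y}) \mapsto \Lambda_{\mathbf{a},\mathbf{B}}(\mathbf{X},\mathbf{X}_0,\pm\mathbf{y},\pm\mathbf{y}_0)$, $(\mathbf{X},\mathbf{y}) \mapsto \Lambda_{\mathbf{a},\mathbf{B}}(\mathbf{X},\mathbf{X}_0,\pm j\mathbf{y},\pm j\mathbf{y}_0)$ is jointly convex in $(\mathbf{X},\mathbf{y})$ (as a real-valued function of the real and imaginary parts of the diagonal entries of $\mathbf{X}$ and the entries of $\mathbf{y}$), so the upper bound $\rho^2+\kappa^2$ together with these constraints is convex.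
   Context: $j=\sqrt{-1}$. $(\cdot)^*$ denotes entrywise complex conjugation, $(\cdot)^{\mathsf T}$ transpose, $(\cdot)^{\mathsf H}$ conjugate transpose, $\|\cdot\|_2$ the Euclidean norm, $\Re\{\cdot\}$ the real part, $|\cdot|$ the modulus. For a vector $\mathbf{v}$, $\mathrm{diag}(\mathbf{v})$ is the diagonal matrix with $\mathbf{v}$ on its diagonal; for a diagonal matrix $\mathbf{Z}$, $\mathrm{diag}(\mathbf{Z})$ is the vector of its diagonal entries, and $\mathrm{diag}(\mathbf{Z}^* )$ is the entrywise conjugate of that vector. *)

From HB Require Import structures.
From mathcomp Require Import all_boot all_order all_algebra.
From mathcomp Require Import reals complex.
Set Implicit Arguments. Unset Strict Implicit. Unset Printing Implicit Defensive.
Import Order.TTheory GRing.Theory Num.Theory.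
Local Open Scope ring_scope.
Local Open Scope complex_scope.

Section Defs.
Variable R : realType.
Local Notation C := R[i].

Definition cnorm2 n (v : 'cV[C]_n) : R := \sum_(i < n) ComplexField.Normc.normc (v i 0) ^+ 2.

Definition hdot n (u w : 'cV[C]_n) : C := \sum_(i < n) (u i 0)^* * w i 0.

Definition diagconj n (Z : 'M[C]_n) : 'cV[C]_n := \col_i (Z i i)^*.

Definition daBz N M (a : 'cV[C]_N) (B : 'M[C]_(N, M)) (z : 'cV[C]_M) : 'cV[C]_N :=
  diag_mx a^T *m B *m z.

Definition Lambda N M (a : 'cV[C]_N) (B : 'M[C]_(N, M))
  (Z1 Z2 : 'M[C]_N) (z3 z4 : 'cV[C]_M) : R :=
  4^-1 * cnorm2 (diagconj Z1 + daBz a B z3)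
  - 2^-1 * complex.Re (hdot (diagconj Z2 - daBz a B z4) (diagconj Z1 - daBz a B z3))
  + 4^-1 * cnorm2 (diagconj Z2 - daBz a B z4).

(* joint convexity of f in (X, y), X ranging over diagonal matrices, as a
   function of the real and imaginary parts (real convex combinations) *)
Definition jointly_convex N M (f : 'M[C]_N -> 'cV[C]_M -> R) : Prop :=
  forall (X1 X2 : 'M[C]_N) (y1 y2 : 'cV[C]_M) (t : R),
    is_diag_mx X1 -> is_diag_mx X2 -> 0 <= t <= 1 ->
    f (t%:C *: X1 + (1 - t)%:C *: X2) (t%:C *: y1 + (1 - t)%:C *: y2)
      <= t * f X1 y1 + (1 - t) * f X2 y2.
End Defs.

From HB Require Import structures.
From mathcomp Require Import all_boot all_order all_algebra.
From mathcomp Require Import reals complex.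
From mathcomp Require Import ring lra.
Import Order.TTheory GRing.Theory Num.Theory.
Set Implicit Arguments. Unset Strict Implicit. Unset Printing Implicit Defensive.
Local Open Scope ring_scope.
Local Open Scope complex_scope.

(* Each summand of Lambda equals Re (x d) + |conj x - d - w|^2 / 4, where x is a
   diagonal entry of Z1, d the matching entry of diag(a) B z3 and w the entry of
   diag(Z2^* ) - diag(a) B z4.  Hence Lambda(X, X0, c y, c y0) >= Re (c a^T X B y),
   and the choices c = 1, -1, j, -j bound |Re| and |Im| of a^T X B y by rho and
   kappa.  Convexity: each summand is the convex quadratic |conj x + d|^2 / 4 plus
   a function affine in (x, d), and d depends linearly on y. *)

Section LambdaEntry.
Variable R : realType.
Local Notation C := R[i].
Local Notation normc := ComplexField.Normc.normc.

Lemma normc_sqr (x : C) : normc x ^+ 2 = complex.Re x ^+ 2 + complex.Im x ^+ 2.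
Proof. by case: x => a b /=; rewrite sqr_sqrtr // addr_ge0 ?sqr_ge0. Qed.

Definition lambda_entry (x d w : C) : R :=
  4^-1 * normc (x^* + d) ^+ 2 - 2^-1 * complex.Re (w^* * (x^* - d)) + 4^-1 * normc w ^+ 2.

Lemma lambda_entryE x d w :
  lambda_entry x d w = complex.Re (x * d) + 4^-1 * normc (x^* - d - w) ^+ 2.
Proof.
rewrite /lambda_entry !normc_sqr.
by case: x => x1 x2; case: d => d1 d2; case: w => w1 w2 /=; field.
Qed.

Lemma Re_mul_le_lambda_entry x d w : complex.Re (x * d) <= lambda_entry x d w.
Proof. by rewrite lambda_entryE lerDl mulr_ge0 ?invr_ge0 ?sqr_ge0. Qed.

Lemma lambda_entry_convex_gap (t : R) x1 x2 d1 d2 w :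
  t * lambda_entry x1 d1 w + (1 - t) * lambda_entry x2 d2 w
  - lambda_entry (t%:C * x1 + (1 - t)%:C * x2) (t%:C * d1 + (1 - t)%:C * d2) w
  = 4^-1 * (t * (1 - t)) * normc ((x1^* + d1) - (x2^* + d2)) ^+ 2.
Proof.
rewrite /lambda_entry !normc_sqr.
case: x1 => ? ?; case: x2 => ? ?; case: d1 => ? ?; case: d2 => ? ?.
by case: w => ? ? /=; field.
Qed.

Lemma lambda_entry_convex (t : R) x1 x2 d1 d2 w : 0 <= t <= 1 ->
  lambda_entry (t%:C * x1 + (1 - t)%:C * x2) (t%:C * d1 + (1 - t)%:C * d2) w
  <= t * lambda_entry x1 d1 w + (1 - t) * lambda_entry x2 d2 w.
Proof.
case/andP=> t_ge0 t_le1; rewrite -subr_ge0 lambda_entry_convex_gap.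
by rewrite mulr_ge0 ?sqr_ge0 // mulr_ge0 ?invr_ge0 ?ler0n // mulr_ge0 ?subr_ge0.
Qed.

Lemma normc_sqr_le (w : C) (rho kappa : R) :
  complex.Re w <= rho -> complex.Re (- w) <= rho ->
  complex.Re ('i * w) <= kappa -> complex.Re (- ('i * w)) <= kappa ->
  normc w ^+ 2 <= rho ^+ 2 + kappa ^+ 2.
Proof. by rewrite normc_sqr; case: w => p q /=; nra. Qed.

End LambdaEntry.

Section LambdaSum.
Variables (R : realType) (N M : nat) (a : 'cV[R[i]]_N) (B : 'M[R[i]]_(N, M)).
Local Notation C := R[i].

Lemma daBzE (z : 'cV[C]_M) i : daBz a B z i 0 = a i 0 * (B *m z) i 0.
Proof. by rewrite /daBz -mulmxA mul_diag_mx !mxE. Qed.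

Lemma daBzD (z1 z2 : 'cV[C]_M) i :
  daBz a B (z1 + z2) i 0 = daBz a B z1 i 0 + daBz a B z2 i 0.
Proof. by rewrite /daBz mulmxDr mxE. Qed.

Lemma daBzZ (c : C) (z : 'cV[C]_M) i : daBz a B (c *: z) i 0 = c * daBz a B z i 0.
Proof. by rewrite /daBz -scalemxAr mxE. Qed.

Lemma Lambda_sum (Z1 Z2 : 'M[C]_N) (z3 z4 : 'cV[C]_M) :
  Lambda a B Z1 Z2 z3 z4 =
  \sum_i lambda_entry (Z1 i i) (daBz a B z3 i 0) ((Z2 i i)^* - daBz a B z4 i 0).
Proof.
rewrite /Lambda /cnorm2 /hdot raddf_sum !mulr_sumr -sumrN -!big_split /=.
by apply: eq_bigr => i _; rewrite !mxE.
Qed.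

Lemma diag_bilinear_sum (X : 'M[C]_N) (y : 'cV[C]_M) : is_diag_mx X ->
  (a^T *m X *m B *m y) 0 0 = \sum_i X i i * daBz a B y i 0.
Proof.
case/diag_mxP => d ->; rewrite -!mulmxA mul_diag_mx mxE.
by apply: eq_bigr => i _; rewrite daBzE !mxE eqxx mulr1n mulrCA.
Qed.

Lemma Re_scale_le_Lambda (X Z2 : 'M[C]_N) (y z4 : 'cV[C]_M) (c : C) : is_diag_mx X ->
  complex.Re (c * (a^T *m X *m B *m y) 0 0) <= Lambda a B X Z2 (c *: y) z4.
Proof.
move=> X_diag; rewrite Lambda_sum diag_bilinear_sum // mulr_sumr raddf_sum.
apply: ler_sum => i _; rewrite daBzZ mulrCA; exact: Re_mul_le_lambda_entry.
Qed.

Lemma Lambda_jointly_convex (Z2 : 'M[C]_N) (z4 : 'cV[C]_M) (c : C)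
    (f : 'cV[C]_M -> 'cV[C]_M) :
  f =1 *:%R c -> jointly_convex (fun X y => Lambda a B X Z2 (f y) z4).
Proof.
move=> fE X1 X2 y1 y2 t _ _ t01 /=.
rewrite !Lambda_sum !fE !mulr_sumr -big_split; apply: ler_sum => i _ /=.
have daBz_comb : daBz a B (c *: (t%:C *: y1 + (1 - t)%:C *: y2)) i 0 =
    t%:C * daBz a B (c *: y1) i 0 + (1 - t)%:C * daBz a B (c *: y2) i 0.
  by rewrite scalerDr !scalerA daBzD !daBzZ; ring.
by rewrite daBz_comb !mxE; apply: lambda_entry_convex.
Qed.

End LambdaSum.

Theorem lemma2 (R : realType) (N M : nat) (hN : (0 < N)%N) (hM : (0 < M)%N)
  (a : 'cV[R[i]]_N) (B : 'M[R[i]]_(N, M))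
  (X0 : 'M[R[i]]_N) (y0 : 'cV[R[i]]_M) (hX0 : is_diag_mx X0) :
  (forall (X : 'M[R[i]]_N) (y : 'cV[R[i]]_M) (rho kappa : R),
     is_diag_mx X ->
     Lambda a B X X0 y y0 <= rho ->
     Lambda a B X X0 (- y) (- y0) <= rho ->
     Lambda a B X X0 ('i *: y) ('i *: y0) <= kappa ->
     Lambda a B X X0 (- ('i *: y)) (- ('i *: y0)) <= kappa ->
     ComplexField.Normc.normc ((a^T *m X *m B *m y) 0 0) ^+ 2 <= rho ^+ 2 + kappa ^+ 2)
  /\ jointly_convex (fun X y => Lambda a B X X0 y y0)
  /\ jointly_convex (fun X y => Lambda a B X X0 (- y) (- y0))
  /\ jointly_convex (fun X y => Lambda a B X X0 ('i *: y) ('i *: y0))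
  /\ jointly_convex (fun X y => Lambda a B X X0 (- ('i *: y)) (- ('i *: y0))).
Proof.
split=> [X y rho kappa X_diag le_rho le_rho' le_kappa le_kappa'|].
  have Re_le c z4 := Re_scale_le_Lambda a B X0 y z4 c X_diag.
  apply: normc_sqr_le.
  - by apply: le_trans le_rho; have := Re_le 1 y0; rewrite mul1r scale1r.
  - by apply: le_trans le_rho'; have := Re_le (-1) (- y0); rewrite mulN1r scaleN1r.
  - exact: le_trans (Re_le 'i _) le_kappa.
  - by apply: le_trans le_kappa'; have := Re_le (- 'i) (- ('i *: y0)); rewrite mulNr scaleNr.
split; first by apply: (Lambda_jointly_convex a B X0 _ (c := 1)) => y; rewrite scale1r.
split; first by apply: (Lambda_jointly_convex a B X0 _ (c := -1)) => y; rewrite scaleN1r.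
split; first exact: (Lambda_jointly_convex a B X0 _ (c := 'i)).
by apply: (Lambda_jointly_convex a B X0 _ (c := - 'i)) => y; rewrite scaleNr.
Qed.
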